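(* Let $k\ge1$ and $m\in\mathbb N$. If $A\subset\mathbb N$ is an SG$_k$ set, then $A\cap m\mathbb N$ is an SG$_k$ set. If $B\subset\mathbb N$ is an SG$_k^*$ set, then $B\cap m\mathbb N$ is an SG$_k^*$ set.
   Context: $\mathbb N=\{1,2,\dots\}$. For $k\ge0$, $\mathcal S_k$ is the family of finite non-empty $\alpha\subset\mathbb N$ such that for every $i\in\alpha$, either $i=\max\alpha$ or there is $j\in\alpha$ with $i<j\le i+k$. For a sequence $(n_i)$ of positive integers, $n_\alpha=\sum_{i\in\alpha}n_i$ and $\mathrm{SG}_k(n_i)=\{n_\alpha:\alpha\in\mathcal S_k\}$. A set $A\subset\mathbb N$ is SG$_k$ if $A\supseteq\mathrm{SG}_k(n_i)$ for some sequence $(n_i)$ of positive integers. A set $B\subset\mathbb N$ is SG$_k^*$ if $B\cap A\ne\emptyset$ for every SG$_k$ set $A$, equivalently if for every sequence $(n_i)$ of positive integers there is $\alpha\in\mathcal S_k$ with $n_\alpha\in B$. *)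

From mathcomp Require Import all_boot.
Set Implicit Arguments. Unset Strict Implicit. Unset Printing Implicit Defensive.

(* N = {1,2,...}.  Subsets of N are predicates on nat; membership of 0 is
   irrelevant/forbidden where needed.  A finite non-empty subset alpha of N
   is represented by a duplicate-free, non-empty list of positive naturals. *)

Definition inSk (k : nat) (alpha : seq nat) : Prop :=
  [/\ alpha <> [::], uniq alpha, (forall i, i \in alpha -> 0 < i) &
      forall i, i \in alpha ->
        i = \max_(j <- alpha) j \/ exists2 j, j \in alpha & i < j <= i + k].

Definition nsum (n : nat -> nat) (alpha : seq nat) : nat := \sum_(i <- alpha) n i.

Definition pos_seq (n : nat -> nat) : Prop := forall i, 0 < i -> 0 < n i.

Definition SGk (k : nat) (A : nat -> Prop) : Prop :=
  (forall x, A x -> 0 < x) /\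
  exists n : nat -> nat, pos_seq n /\
    forall alpha, inSk k alpha -> A (nsum n alpha).

Definition SGk_star (k : nat) (B : nat -> Prop) : Prop :=
  (forall x, B x -> 0 < x) /\
  forall A : nat -> Prop, SGk k A -> exists x, B x /\ A x.

Definition inter_mult (A : nat -> Prop) (m : nat) : nat -> Prop :=
  fun x => A x /\ exists2 t, 0 < t & x = m * t.

(* Index the terms of (n_i) as n_(1 + kT + s) with 0 <= s < k, so that each
   residue s gives a subsequence.  By pigeonhole on the vector of residues mod m
   of the k partial sums, there are cut points L_0 < L_1 < ... at which all
   these residue vectors coincide.  Merging, for i = 1 + kb + s, the terms
   1 + kT + s with L_b <= T < L_(b+1) into one term n'_i makes every n'_i a
   multiple of m, and the merged index set of an S_k set is again in S_k:
   inside a block consecutive indices differ by k, and if i < j <= i + k then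
   the last index of the block of i is followed within distance k by an index
   of the block of j.  Hence SG_k(n'_i) lies in SG_k(n_i) and in mN.
   The SG_k^* statement follows since B ∩ mN meets A iff B meets A ∩ mN. *)
From Stdlib Require Import Classical ClassicalEpsilon.
From mathcomp Require Import all_boot zify.
Set Implicit Arguments. Unset Strict Implicit. Unset Printing Implicit Defensive.

Definition infinitely_often (P : nat -> Prop) := forall N, exists x, N <= x /\ P x.

Lemma infinite_pigeonhole (T : finType) (f : nat -> T) :
  exists y, infinitely_often (fun x => f x = y).
Proof.
apply: NNPP => none.
have bounded y : exists N, forall x, N <= x -> f x <> y.
  apply: NNPP => unbounded; apply: none; exists y => N.
  apply: NNPP => hN; apply: unbounded; exists N => x Nx fx.
  by apply: hN; exists x.
have [N hN] := fin_all_exists bounded.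
exact: hN _ _ (leq_bigmax (f (\max_y N y))) erefl.
Qed.

Lemma infinitely_often_enum (P : nat -> Prop) : infinitely_often P ->
  exists L : nat -> nat, (forall b, L b < L b.+1) /\ (forall b, P (L b)).
Proof.
move=> /choice [g hg].
exists (fun b => iter b (fun y => g y.+1) (g 0)); split => [b|[|b]] /=.
- exact: (hg _).1.
- exact: (hg _).2.
- exact: (hg _).2.
Qed.

Lemma dvdn_sum_nat_eqmod m (f : nat -> nat) a c : a <= c ->
  \sum_(0 <= i < c) f i = \sum_(0 <= i < a) f i %[mod m] ->
  m %| \sum_(a <= i < c) f i.
Proof.
move=> ac; rewrite (big_cat_nat (leq0n a) ac) /= => /eqP.
by rewrite eqn_mod_dvd ?leq_addr // addKn.
Qed.

Lemma uniq_flatten_disjoint (I T : eqType) (J : I -> seq T) (s : seq I) :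
  uniq s -> (forall i, i \in s -> uniq (J i)) ->
  (forall i i' x, i \in s -> i' \in s -> x \in J i -> x \in J i' -> i = i') ->
  uniq (flatten [seq J i | i <- s]).
Proof.
elim: s => //= a s IH /andP[a_s s_uniq] J_uniq J_disj.
rewrite cat_uniq J_uniq ?mem_head // IH //; first last.
- by move=> i i' x i_s i'_s; apply: J_disj; rewrite inE ?i_s ?i'_s orbT.
- by move=> i i_s; apply: J_uniq; rewrite inE i_s orbT.
rewrite andbT; apply/hasPn => x /flatten_mapP [i i_s xi]; apply/negP => xa.
by move: a_s; rewrite (J_disj a i x) ?mem_head ?inE ?i_s ?orbT.
Qed.

Section Blocks.

Variables (k : nat) (L : nat -> nat).
Hypothesis k_gt0 : 0 < k.
Hypothesis L_incr : forall b, L b < L b.+1.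

Local Notation enc T s := (1 + k * T + s).

Lemma L_lt : {homo L : b b' / b < b'}.
Proof. exact: homo_ltn ltn_trans L_incr. Qed.

Lemma L_le : {homo L : b b' / b <= b'}.
Proof. exact: ltnW_homo L_lt. Qed.

Lemma L_range_uniq b b' T :
  L b <= T < L b.+1 -> L b' <= T < L b'.+1 -> b = b'.
Proof.
move=> /andP[Tb Tb1] /andP[Tb' Tb'1].
case: (ltngtP b b') => // [iquo'|b'b]; [have := L_le iquo' | have := L_le b'b]; lia.
Qed.

Lemma enc_inj T T' s s' : s < k -> s' < k -> enc T s = enc T' s' -> T = T' /\ s = s'.
Proof.
move=> sk s'k e1; have e : k * T + s = k * T' + s' by lia.
have := congr1 (divn^~ k) e; have := congr1 (modn^~ k) e.
rewrite ![k * _]mulnC !modnMDl !divnMDl // !modn_small // !divn_small //.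
by rewrite !addn0.
Qed.

Lemma enc_lt T T' s s' : s < k -> T < T' -> enc T s < enc T' s'.
Proof. by move=> sk TT'; have := leq_mul (leqnn k) TT'; rewrite mulnS; lia. Qed.

Lemma enc_leq_fst T T' s s' : s' < k -> enc T s <= enc T' s' -> T <= T'.
Proof. by move=> s'k; apply: contraTT; rewrite -!ltnNge => /(enc_lt s s'k). Qed.

Definition iquo i := i.-1 %/ k.
Definition irem i := i.-1 %% k.

Lemma irem_lt i : irem i < k.
Proof. exact: ltn_pmod. Qed.

Lemma enc_iquo_irem i : 0 < i -> i = enc (iquo i) (irem i).
Proof. by move=> i_gt0; have := divn_eq i.-1 k; rewrite /iquo /irem; lia. Qed.

Definition block i := [seq enc T (irem i) | T <- index_iota (L (iquo i)) (L (iquo i).+1)].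

Lemma mem_block o i :
  reflect (exists2 T, L (iquo i) <= T < L (iquo i).+1 & o = enc T (irem i))
          (o \in block i).
Proof.
apply: (iffP mapP) => [[T] | [T]]; rewrite ?mem_index_iota => T_range ->.
all: by exists T; rewrite ?mem_index_iota.
Qed.

Lemma block_uniq i : uniq (block i).
Proof.
by rewrite map_inj_uniq ?iota_uniq // => T T' /(enc_inj (irem_lt i) (irem_lt i)) [].
Qed.

Lemma block_disjoint i i' o :
  0 < i -> 0 < i' -> o \in block i -> o \in block i' -> i = i'.
Proof.
move=> i_gt0 i'_gt0 /mem_block [T Ti ->] /mem_block [T' Ti'].
case/(enc_inj (irem_lt _) (irem_lt _)) => eT es; subst T'.
by rewrite (enc_iquo_irem i_gt0) (enc_iquo_irem i'_gt0) (L_range_uniq Ti Ti') es.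
Qed.

Definition block_last i := enc (L (iquo i).+1).-1 (irem i).

Lemma block_last_mem i : block_last i \in block i.
Proof.
by apply/mem_block; exists (L (iquo i).+1).-1 => //; have := L_incr (iquo i); lia.
Qed.

Lemma block_succ i o : o \in block i -> o + k \in block i \/ o = block_last i.
Proof.
case/mem_block=> T /andP[Tlo Thi] ->.
have [Tlast|Tnext] := eqVneq T.+1 (L (iquo i).+1).
  by right; rewrite /block_last -Tlast.
by left; apply/mem_block; exists T.+1; rewrite ?mulnS; lia.
Qed.

Lemma block_le_last i i' o : 0 < i' -> i' <= i -> o \in block i' -> o <= block_last i.
Proof.
move=> i'_gt0 i'i /mem_block [T' /andP[_ T'hi] ->].
have i_gt0 : 0 < i by apply: leq_trans i'i.
have enc_le : enc (iquo i') (irem i') <= enc (iquo i) (irem i) by rewrite -!enc_iquo_irem.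
have [/L_le iquo_lt | iquo_eq] : (iquo i').+1 <= iquo i \/ iquo i' = iquo i.
  by have := enc_leq_fst (irem_lt i) enc_le; lia.
- by apply/ltnW/enc_lt; rewrite ?irem_lt //; have := L_incr (iquo i); lia.
- rewrite iquo_eq in enc_le T'hi.
  have : k * T' <= k * (L (iquo i).+1).-1 by rewrite leq_mul2l; apply/orP; right; lia.
  rewrite /block_last; lia.
Qed.

Lemma block_next i j : 0 < i -> i < j <= i + k ->
  exists2 o, o \in block j & block_last i < o <= block_last i + k.
Proof.
move=> i_gt0 /andP[ij jik]; have j_gt0 : 0 < j by apply: leq_trans ij.
have Lpos : 0 < L (iquo i).+1 by apply: leq_ltn_trans (L_incr _).
have enc_lt_ij : enc (iquo i) (irem i) < enc (iquo j) (irem j) by rewrite -!enc_iquo_irem.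
have enc_le_ji : enc (iquo j) (irem j) <= enc (iquo i) (irem i) + k.
  by rewrite -!enc_iquo_irem.
have le_iquo : iquo i <= iquo j by apply: enc_leq_fst (ltnW enc_lt_ij); exact: irem_lt.
have le_iquoS : iquo j <= (iquo i).+1.
  apply: (enc_leq_fst (s := irem j) (irem_lt i)); rewrite mulnS; lia.
rewrite /block_last; have := irem_lt j.
have [iquo_eq | iquo_eqS] : iquo j = iquo i \/ iquo j = (iquo i).+1 by lia.
- exists (enc (L (iquo i).+1).-1 (irem j)).
    apply/mem_block; exists (L (iquo i).+1).-1; rewrite ?iquo_eq //.
    by have := L_incr (iquo i); lia.
  by rewrite iquo_eq in enc_lt_ij; lia.
- exists (enc (L (iquo i).+1) (irem j)).
    by apply/mem_block; exists (L (iquo i).+1); rewrite ?iquo_eqS ?leqnn ?L_incr.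
  rewrite iquo_eqS mulnS in enc_le_ji.
  by rewrite -[in k * L _](prednK Lpos) mulnS; lia.
Qed.

Lemma flatten_blocks_inSk alpha :
  inSk k alpha -> inSk k (flatten [seq block i | i <- alpha]).
Proof.
case=> alpha_nil alpha_uniq alpha_pos alpha_step.
have memP o : reflect (exists2 i, i \in alpha & o \in block i)
                      (o \in flatten [seq block i | i <- alpha]) := flatten_mapP.
split.
- case: alpha alpha_nil {alpha_uniq alpha_pos alpha_step memP} => // a s _.
  by move=> /(congr1 (fun s => block_last a \in s)); rewrite /= mem_cat block_last_mem.
- apply: uniq_flatten_disjoint => // [i _ | i i' o /alpha_pos + /alpha_pos].
    exact: block_uniq.
  exact: block_disjoint.
- by move=> o /memP [i _ /mem_block [T _ ->]].
move=> o /memP [i i_in o_in].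
have [o_k_in | ->] := block_succ o_in.
  by right; exists (o + k); [apply/memP; exists i | lia].
have [i_max | [j j_in ij]] := alpha_step i i_in.
- left; apply/eqP; rewrite eqn_leq; apply/andP; split.
    apply: (leq_bigmax_seq (F := id)) => //.
    by apply/memP; exists i; rewrite ?block_last_mem.
  apply/bigmax_leqP_seq => o' /memP [i' i'_in o'_in] _.
  apply: block_le_last o'_in; first exact: alpha_pos.
  by rewrite i_max; apply: (leq_bigmax_seq (F := id)).
- right; have [o' o'_in o'_range] := block_next (alpha_pos i i_in) ij.
  by exists o' => //; apply/memP; exists j.
Qed.

End Blocks.

Lemma cut_points_eqmod k m (f : nat -> nat -> nat) : 0 < m ->
  exists L : nat -> nat, (forall b, L b < L b.+1) /\
    forall s b b', s < k -> f s (L b) = f s (L b') %[mod m].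
Proof.
case: m => // m _.
pose residues x : {ffun 'I_k -> 'I_m.+1} := [ffun s : 'I_k => inord (f s x %% m.+1)].
have residuesE x s : val (residues x s) = f s x %% m.+1.
  by rewrite ffunE /= inordK // ltn_pmod.
have [r /infinitely_often_enum [L [L_incr L_res]]] := infinite_pigeonhole residues.
exists L; split=> // s b b' sk.
by rewrite -!(residuesE _ (Ordinal sk)) !L_res.
Qed.

Lemma SG_coarsening_dvd k m (n : nat -> nat) : 0 < k -> 0 < m -> pos_seq n ->
  exists2 n' : nat -> nat, pos_seq n' /\ (forall i, m %| n' i) &
    forall alpha, inSk k alpha -> exists2 beta, inSk k beta & nsum n beta = nsum n' alpha.
Proof.
move=> k_gt0 m_gt0 n_pos.
have [L [L_incr L_eqmod]] :=
  cut_points_eqmod k (fun s x => \sum_(0 <= T < x) n (1 + k * T + s)) m_gt0.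
exists (fun i => nsum n (block k L i)); first split.
- move=> i _; rewrite /nsum (big_rem _ (block_last_mem k_gt0 L_incr i)) /=.
  by apply: ltn_addr; apply: n_pos.
- move=> i; rewrite /nsum big_map.
  exact: dvdn_sum_nat_eqmod (ltnW (L_incr _)) (L_eqmod _ _ _ (irem_lt k_gt0 i)).
move=> alpha alpha_Sk; exists (flatten [seq block k L i | i <- alpha]).
  exact: flatten_blocks_inSk.
by rewrite /nsum big_flatten big_map.
Qed.

Lemma inter_mult_dvd (A : nat -> Prop) m x :
  A x -> 0 < x -> m %| x -> inter_mult A m x.
Proof.
move=> Ax x_gt0 /dvdnP [t x_eq]; split; first exact: Ax.
exists t; last by rewrite mulnC.
by move: x_gt0; rewrite x_eq muln_gt0 => /andP[].
Qed.

Lemma SGk_inter_mult k m (A : nat -> Prop) :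
  0 < k -> 0 < m -> SGk k A -> SGk k (inter_mult A m).
Proof.
move=> k_gt0 m_gt0 [A_pos [n [n_pos A_SG]]]; split=> [x [/A_pos] // | ].
have [n' [n'_pos n'_dvd] coarsen] := SG_coarsening_dvd k_gt0 m_gt0 n_pos.
exists n'; split=> // alpha /coarsen [beta /A_SG A_beta sum_eq].
have A_sum : A (nsum n' alpha) by rewrite -sum_eq.
by apply: inter_mult_dvd A_sum (A_pos _ A_sum) _; apply: dvdn_sum.
Qed.

Lemma SGk_star_inter_mult k m (B : nat -> Prop) :
  0 < k -> 0 < m -> SGk_star k B -> SGk_star k (inter_mult B m).
Proof.
move=> k_gt0 m_gt0 [B_pos B_meets]; split=> [x [/B_pos] // | A].
by move=> /(SGk_inter_mult k_gt0 m_gt0) /B_meets [x [Bx [Ax x_mult]]]; exists x.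
Qed.

Theorem corollary3p3 (k m : nat) (hk : 1 <= k) (hm : 1 <= m) :
  (forall A : nat -> Prop, SGk k A -> SGk k (inter_mult A m)) /\
  (forall B : nat -> Prop, SGk_star k B -> SGk_star k (inter_mult B m)).
Proof.
by split=> ?; [exact: SGk_inter_mult | exact: SGk_star_inter_mult].
Qed.
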